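(* Let $R$ be an associative ring with unity, $\sigma$ an endomorphism of $R$ and $\delta$ a $\sigma$-derivation of $R$. Let $a,b,c\in R$ and let $e\in\mathcal{S}_\ell(R)$ be such that $b\in r_R(cR)=eR$ and $Re$ is $(\sigma,\delta)$-stable. Then: (i) $c\,\sigma(ab)=c\,\delta(ab)=0$; (ii) $c\,f_k^j(ab)=0$ for all integers $0\le k\le j$.
   Context: A $\sigma$-derivation is an additive map $\delta\colon R\to R$ with $\delta(ab)=\sigma(a)\delta(b)+\delta(a)b$ for all $a,b\in R$. For $X\subseteq R$, $r_R(X)=\{a\in R\mid Xa=0\}$. An idempotent $e$ is left semicentral if $ere=re$ for all $r\in R$; $\mathcal{S}_\ell(R)$ denotes the set of left semicentral idempotents of $R$. A subset $X\subseteq R$ is $(\sigma,\delta)$-stable if $\sigma(X)\subseteq X$ and $\delta(X)\subseteq X$. For integers $0\le i\le j$, $f_i^j\in\mathrm{End}(R,+)$ denotes the sum of all possible words (compositions) in $\sigma,\delta$ built with $i$ letters $\sigma$ and $j-i$ letters $\delta$ (so $f_j^j=\sigma^j$, $f_0^j=\delta^j$); in the Ore extension $R[x;\sigma,\delta]$ one has $x^nr=\sum_{i=0}^n f_i^n(r)x^i$. *)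

From HB Require Import structures.
From mathcomp Require Import all_boot all_algebra.
Set Implicit Arguments. Unset Strict Implicit. Unset Printing Implicit Defensive.
Import GRing.Theory.
Local Open Scope ring_scope.

(* delta is a sigma-derivation (additivity is carried by the {additive} type) *)
Definition sigma_derivation (R : nzRingType) (sigma delta : R -> R) : Prop :=
  forall a b : R, delta (a * b) = sigma a * delta b + delta a * b.

Definition rann (R : nzRingType) (X : R -> Prop) : R -> Prop :=
  fun a => forall x, X x -> x * a = 0.

Definition rprinc (R : nzRingType) (c : R) : R -> Prop := fun x => exists r, x = c * r.
Definition lprinc (R : nzRingType) (e : R) : R -> Prop := fun x => exists r, x = r * e.

Definition left_semicentral (R : nzRingType) (e : R) : Prop :=
  e * e = e /\ forall r : R, e * r * e = r * e.

Definition sd_stable (R : nzRingType) (sigma delta : R -> R) (X : R -> Prop) : Prop :=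
  (forall x, X x -> X (sigma x)) /\ (forall x, X x -> X (delta x)).

(* the composition of the word w (true = sigma, false = delta), leftmost letter outermost *)
Definition apply_word (R : nzRingType) (sigma delta : R -> R) (w : seq bool) : R -> R :=
  foldr (fun (l : bool) g => (if l then sigma else delta) \o g) id w.

Definition f_word (R : nzRingType) (sigma delta : R -> R) (i j : nat) (x : R) : R :=
  \sum_(w : j.-tuple bool | count id w == i) apply_word sigma delta w x.

From HB Require Import structures.
From mathcomp Require Import all_boot all_algebra.
Set Implicit Arguments. Unset Strict Implicit.
Import GRing.Theory.
Local Open Scope ring_scope.

(* Since e is left semicentral, eR is a two-sided ideal containing ab, and the
   stability of Re under sigma and delta transfers to eR (write sigma(e) = s e,
   delta(e) = d e and expand sigma(e y), delta(e y)).  Hence every word in sigma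
   and delta maps ab into eR = r(cR), which c annihilates; so does every sum
   f_k^j of such words. *)

Section SemicentralIdeal.

Variables (R : nzRingType) (e : R).
Hypothesis e_semicentral : left_semicentral e.

Lemma rprinc_mull (r x : R) : rprinc e x -> rprinc e (r * x).
Proof.
case: e_semicentral => _ eRe [y ->].
by exists (r * e * y); rewrite !mulrA eRe.
Qed.

Lemma rprinc_lprinc_mulr (x y : R) : lprinc e x -> rprinc e (x * y).
Proof. by case=> r ->; rewrite -mulrA; apply: rprinc_mull; exists y. Qed.

Lemma rprinc_add (x y : R) : rprinc e x -> rprinc e y -> rprinc e (x + y).
Proof. by move=> [u ->] [v ->]; exists (u + v); rewrite mulrDr. Qed.

Lemma sd_stable_rprinc (sigma : {rmorphism R -> R}) (delta : R -> R) :
  sigma_derivation sigma delta -> sd_stable sigma delta (lprinc e) ->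
  sd_stable sigma delta (rprinc e).
Proof.
move=> der [sigma_Re delta_Re].
have e_Re : lprinc e e by exists 1; rewrite mul1r.
split=> _ [y ->].
- by rewrite rmorphM; apply: rprinc_lprinc_mulr (sigma_Re _ e_Re).
- rewrite der; apply: rprinc_add; apply: rprinc_lprinc_mulr.
  + exact: sigma_Re e_Re.
  + exact: delta_Re e_Re.
Qed.

End SemicentralIdeal.

Lemma sd_stable_apply_word (R : nzRingType) (sigma delta : R -> R)
    (X : R -> Prop) (w : seq bool) (x : R) :
  sd_stable sigma delta X -> X x -> X (apply_word sigma delta w x).
Proof.
move=> [sigmaX deltaX] Xx.
by elim: w => [|l w IHw] //=; case: l; [apply: sigmaX | apply: deltaX].
Qed.

Lemma mulr_f_word_eq0 (R : nzRingType) (sigma delta : R -> R)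
    (X : R -> Prop) (c x : R) (k j : nat) :
  sd_stable sigma delta X -> (forall y, X y -> c * y = 0) -> X x ->
  c * f_word sigma delta k j x = 0.
Proof.
move=> stableX cX Xx; rewrite /f_word mulr_sumr big1 // => w _.
by apply/cX; apply: sd_stable_apply_word.
Qed.

Lemma rann_rprinc_mul (R : nzRingType) (c x : R) : rann (rprinc c) x -> c * x = 0.
Proof. by move=> cRx; rewrite -[c]mulr1; apply: cRx; exists 1. Qed.

Theorem lemma2p1 (R : nzRingType) (sigma : {rmorphism R -> R})
  (delta : {additive R -> R}) (a b c e : R) :
  sigma_derivation sigma delta ->
  left_semicentral e ->
  rann (rprinc c) b ->
  (forall x, rann (rprinc c) x <-> rprinc e x) ->
  sd_stable sigma delta (lprinc e) ->
  (c * sigma (a * b) = 0 /\ c * delta (a * b) = 0) /\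
  (forall k j : nat, (k <= j)%N -> c * f_word sigma delta k j (a * b) = 0).
Proof.
move=> der e_sc b_ann rann_eR Re_stable.
have eR_stable := sd_stable_rprinc e_sc der Re_stable.
have c_eR y : rprinc e y -> c * y = 0 by move/rann_eR/rann_rprinc_mul.
have ab_eR : rprinc e (a * b) by apply/rprinc_mull/rann_eR.
split=> [|k j _]; last exact: mulr_f_word_eq0 eR_stable c_eR ab_eR.
have [sigma_eR delta_eR] := eR_stable.
by split; apply/c_eR; [apply: sigma_eR | apply: delta_eR].
Qed.
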